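(* Let $S$ be of the form $S_t=\sum_{-r<s\le t}(\Delta L_s)^2$ with $\mathbb E[L_1^4]<\infty$, and let $X$ be the unique solution to $dX_t=(\eta-c_\mu X_t+\xi(X)_t)\,dt+c_\nu X_{t-}\,dS_t$, $t\ge0$, where $\xi(X)_t=\int_{-p}^0 f_\mu(u)X_{t+u}\,du+\int_{-q+}^0 f_\nu(u)X_{t+u-}\,dS_{t+u}$. Suppose $\eta>0$, $c_\mu>\|f_\mu\|_{L^1}$ and $X_u\ge x^-:=\eta/(c_\mu-\|f_\mu\|_{L^1})$ for all $u\in[-r,0]$. Then for each $t>0$, $X_t\ge x^-$ almost surely; in particular $X_t$ is positive and bounded away from zero by $x^-$.
   Context: Let $p,q\ge0$, $r:=p\vee q$, $(\Omega,\mathcal F,\mathbb F=(\mathcal F_t)_{t\ge-r},\mathbb P)$ a filtered probability space with the usual conditions, and $(L_t)_{t\ge-r}$ a càdlàg adapted centered Lévy process with $L_{-r}=0$ and increments independent of the past and stationary. Parameters: $c_\nu>0$, $f_\mu,f_\nu$ nonnegative continuous functions supported on $[-p,0]$ and $[-q,0]$. The initial condition $X=\Phi$ on $[-r,0]$ is a càdlàg process adapted to the natural filtration of $L$ with $\mathbb E[\sup_{[-r,0]}|\Phi|^2]<\infty$; the solution is the unique adapted càdlàg process with $\mathbb E[\sup_{s\in[-r,t]}|X_s|^2]<\infty$ for all $t$. *)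

From mathcomp Require Import all_boot all_order all_algebra.
From mathcomp Require Import all_classical all_reals all_analysis.
Set Implicit Arguments. Unset Strict Implicit. Unset Printing Implicit Defensive.
Import Order.TTheory GRing.Theory Num.Theory.
Import numFieldNormedType.Exports.
Local Open Scope classical_set_scope.
Local Open Scope ring_scope.

Section defs.
Context {R : realType} {d : measure_display} {T : measurableType d}.

Definition measurable_wrt (G : set (set T)) (f : T -> R) :=
  forall B : set R, measurable B -> G (f @^-1` B).

Definition filtration (r : R) (F : R -> set (set T)) :=
  (forall t, -r <= t -> sigma_algebra setT (F t) /\ F t `<=` measurable) /\
  (forall s t, -r <= s -> s <= t -> F s `<=` F t).

Definition usual_conditions (P : probability T R) (r : R)
    (F : R -> set (set T)) :=
  (forall t, -r <= t -> forall N : set T,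
      (exists M, measurable M /\ P M = 0%E /\ N `<=` M) -> F t N) /\
  (forall t, -r <= t -> F t = \bigcap_(s in `]t, +oo[) F s).

Definition cadlag_on (f : R -> R) (a : R) :=
  forall t, a <= t -> (f x @[x --> t^'+] --> f t) /\
                      (a < t -> cvg (f x @[x --> t^'-])).

Definition left_lim (f : R -> R) (t : R) : R := lim (f x @[x --> t^'-]).

Definition jumpsq (f : R -> R) (t : R) : R := (f t - left_lim f t) ^+ 2.

Definition levy_process (P : probability T R) (r : R)
    (F : R -> set (set T)) (L : R -> T -> R) :=
  (forall w, L (-r) w = 0) /\
  [/\ (forall t, -r <= t -> measurable_wrt (F t) (L t)),
      (forall w, cadlag_on (fun t => L t w) (-r)),
      (forall s t, -r <= s -> s <= t -> forall (A : set T) (B : set R),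
          F s A -> measurable B ->
          P (A `&` ((fun w => L t w - L s w) @^-1` B)) =
          (P A * P ((fun w => (L t w - L s w)%R) @^-1` B))%E),
      (forall s t h, -r <= s -> s <= t -> 0 <= h -> forall B : set R,
          measurable B ->
          P ((fun w => L (t + h) w - L (s + h) w) @^-1` B) =
          P ((fun w => L t w - L s w) @^-1` B)) &
      (forall t, -r <= t -> P.-integrable setT (EFin \o L t) /\
          (\int[P]_w (L t w)%:E = 0)%E)].

Definition natural_filtration (r : R) (L : R -> T -> R) (u : R) : set (set T) :=
  <<s [set A | exists v (B : set R), [/\ -r <= v, v <= u, measurable B &
                                         A = L v @^-1` B]] >>.

Definition Spath (r : R) (Lw : R -> R) (t : R) : \bar R :=
  \esum_(s in `]-r, t]) (jumpsq Lw s)%:E.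

Definition jump_dom (r a b : R) : set R := `]a, b] `&` `]-r, +oo[.

(** Since S is nondecreasing and pure jump with Delta S_s = (Delta L_s)^2,
    its Lebesgue--Stieltjes measure dS is sum_{s > -r} (Delta L_s)^2 delta_s. *)
Definition dS_int (r : R) (Lw : R -> R) (a b : R) (g : R -> R) : R :=
  fine (\esum_(s in jump_dom r a b)
          (Num.max (g s) 0 * jumpsq Lw s)%:E)
  - fine (\esum_(s in jump_dom r a b)
          (Num.max (- g s) 0 * jumpsq Lw s)%:E).

Definition dS_integrable (r : R) (Lw : R -> R) (a b : R) (g : R -> R) :=
  (\esum_(s in jump_dom r a b) (`|g s| * jumpsq Lw s)%:E < +oo)%E.

Definition xi (r p q : R) (fmu fnu : R -> R) (Lw Xw : R -> R) (t : R) : R :=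
  Rintegral lebesgue_measure `[-p, 0] (fun u => fmu u * Xw (t + u))
  + dS_int r Lw (t - q) t (fun s => fnu (s - t) * left_lim Xw s).

Definition solves_path (r p q eta cmu cnu : R) (fmu fnu : R -> R)
    (Lw Xw : R -> R) :=
  forall t, 0 <= t ->
  [/\ (forall s, 0 <= s -> s <= t ->
         lebesgue_measure.-integrable `[-p, 0]
           (EFin \o (fun u => fmu u * Xw (s + u)))),
      (forall s, 0 <= s -> s <= t ->
         dS_integrable r Lw (s - q) s (fun v => fnu (v - s) * left_lim Xw v)),
      lebesgue_measure.-integrable `[0, t]
        (EFin \o (fun s => eta - cmu * Xw s + xi r p q fmu fnu Lw Xw s)),
      dS_integrable r Lw 0 t (left_lim Xw) &
      Xw t = Xw 0
        + Rintegral lebesgue_measure `[0, t]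
            (fun s => eta - cmu * Xw s + xi r p q fmu fnu Lw Xw s)
        + cnu * dS_int r Lw 0 t (left_lim Xw)].

Definition is_solution (P : probability T R) (r : R) (F : R -> set (set T))
    (p q eta cmu cnu : R) (fmu fnu : R -> R) (L X : R -> T -> R) :=
  [/\ (forall t, -r <= t -> measurable_wrt (F t) (X t)),
      (forall w, cadlag_on (fun t => X t w) (-r)),
      (forall t, -r <= t ->
         (\int[P]_w ereal_sup [set ((`|X u w|) ^+ 2)%R%:E | u in `[(-r)%R, t]]
            < +oo)%E) &
      {ae P, forall w, solves_path r p q eta cmu cnu fmu fnu
                         (fun t => L t w) (fun t => X t w)}].

End defs.

From mathcomp Require Import all_boot all_order all_algebra.
From mathcomp Require Import all_classical all_reals all_analysis.
From mathcomp Require Import unstable lra.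
Import Order.TTheory GRing.Theory Num.Theory.
Import numFieldNormedType.Exports.
Local Open Scope classical_set_scope.
Local Open Scope ring_scope.

(* Fix a level 0 < l < x^-.  While X stays positive the jump term
   c_nu X_{t-} dS_t only pushes X up, and once X >= l on the past,
   xi(X)_t >= ||f_mu|| l; so whenever X is close to l the drift
   eta - c_mu X + xi(X) is at least about (c_mu - ||f_mu||)(x^- - l) > 0.
   Hence the set of times up to which X >= l is closed (left limits of the
   absolutely continuous part, upward jumps) and open to the right
   (right-continuity and positive drift), so it is all of [0, oo) by
   continuous induction; finally let l increase to x^-. *)

Lemma esum_subset_le {R : realType} {T : choiceType} (A B : set T)
    (a : T -> \bar R) :
  A `<=` B -> (\esum_(i in A) a i <= \esum_(i in B) a i)%E.
Proof.
move=> AB; apply: ge_ereal_sup => _ [X [finX XA] <-].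
by apply: ereal_sup_ubound; exists X => //; split => //; exact: subset_trans AB.
Qed.

Lemma real_induction {R : realType} (a : R) (P : R -> Prop) :
  P a ->
  (forall s, a < s -> (forall u, a <= u < s -> P u) -> P s) ->
  (forall s, a <= s -> (forall u, a <= u <= s -> P u) ->
     exists2 s', s < s' & forall u, s <= u <= s' -> P u) ->
  forall t, a <= t -> P t.
Proof.
move=> Pa P_closed P_extend t a_le_t.
pose A := [set s | a <= s <= t /\ forall u, a <= u <= s -> P u].
have Aa : A a.
  split=> [|u /andP[au ua]]; first by rewrite lexx.
  by have -> : u = a by apply/le_anti; rewrite ua au.
have supA : has_sup A by split; [exists a | exists t => s [/andP[_]]].
set σ := sup A.
have aσ : a <= σ by exact: sup_upper_bound.
have σt : σ <= t by apply: ge_sup => [|s [/andP[_]]] //; exists a.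
have below : forall u, a <= u < σ -> P u.
  move=> u /andP[au uσ].
  have [s [_ Ps] us] := @sup_adherent _ A (σ - u) ltac:(by rewrite subr_gt0) supA.
  rewrite opprB addrC subrK in us.
  by apply: Ps; rewrite au ltW.
have Pσ : forall u, a <= u <= σ -> P u.
  move=> u /andP[au]; rewrite le_eqVlt => /predU1P[->|uσ]; last by apply: below; rewrite au.
  have [<-//|aσ'] := eqVneq a σ.
  by apply: P_closed; [rewrite lt_neqAle aσ' aσ|].
have σE : σ = t.
  apply/le_anti; rewrite σt /= leNgt; apply/negP => σlt.
  have [s' σs' Ps'] := P_extend σ aσ Pσ.
  have : A (Num.min s' t).
    split; first by rewrite ge_min lexx orbT andbT le_min (le_trans aσ (ltW σs')).
    move=> u /andP[au]; rewrite le_min => /andP[us' _].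
    by have [uσ|σu] := leP u σ; [apply: Pσ; rewrite au | apply: Ps'; rewrite (ltW σu)].
  by move/(sup_upper_bound supA); rewrite -/σ leNgt lt_min σs' σlt.
by apply: Pσ; rewrite a_le_t σE lexx.
Qed.

Section dS_integral.
Context {R : realType}.
Variables (r : R) (Lw : R -> R).

Lemma jumpsq_ge0 (f : R -> R) s : 0 <= jumpsq f s.
Proof. exact: sqr_ge0. Qed.

Lemma ge0_dS_intE (a b : R) (g : R -> R) :
  (forall s, jump_dom r a b s -> 0 <= g s) ->
  dS_int r Lw a b g = fine (\esum_(s in jump_dom r a b) (g s * jumpsq Lw s)%:E).
Proof.
move=> g_ge0; rewrite /dS_int [X in _ - fine X]esum1 ?subr0; last first.
  by move=> s /g_ge0 gs; rewrite max_r ?mul0r // oppr_le0.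
by congr fine; apply: eq_esum => s /g_ge0 gs; rewrite max_l.
Qed.

Lemma dS_int_ge0 (a b : R) (g : R -> R) :
  (forall s, jump_dom r a b s -> 0 <= g s) -> 0 <= dS_int r Lw a b g.
Proof.
move=> g_ge0; rewrite ge0_dS_intE //; apply/fine_ge0/esum_ge0 => s /g_ge0 gs.
by rewrite lee_fin mulr_ge0 // jumpsq_ge0.
Qed.

Lemma dS_int_le (a b b' : R) (g : R -> R) : b <= b' ->
  (forall s, jump_dom r a b' s -> 0 <= g s) ->
  dS_integrable r Lw a b' g ->
  dS_int r Lw a b g <= dS_int r Lw a b' g.
Proof.
move=> bb' g_ge0 g_int.
have sub : jump_dom r a b `<=` jump_dom r a b'.
  by apply: setSI; apply: subset_itvl; rewrite bnd_simp.
rewrite !ge0_dS_intE //; last by move=> s /sub /g_ge0.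
have ge0 : forall D, D `<=` jump_dom r a b' ->
    (0 <= \esum_(s in D) (g s * jumpsq Lw s)%:E)%E.
  by move=> D DS; apply: esum_ge0 => s /DS /g_ge0 gs; rewrite lee_fin mulr_ge0 // jumpsq_ge0.
have fin : (\esum_(s in jump_dom r a b') (g s * jumpsq Lw s)%:E < +oo)%E.
  by move: g_int; rewrite /dS_integrable; under eq_esum => s /g_ge0 gs do rewrite ger0_norm //.
have le_bb' := @esum_subset_le _ _ _ _ (fun s => (g s * jumpsq Lw s)%:E) sub.
apply: fine_le => //; rewrite ge0_fin_numE ?ge0 //; exact: le_lt_trans fin.
Qed.

End dS_integral.

Lemma left_lim_ge {R : realType} (f : R -> R) (a c v : R) : cadlag_on f a ->
  a < v -> (forall u, a <= u < v -> c <= f u) -> c <= left_lim f v.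
Proof.
move=> f_cadlag av f_ge; apply: limr_ge; first by have [_ /(_ av)] := f_cadlag v (ltW av).
near=> u; apply: f_ge; apply/andP; split.
  by apply: ltW; near: u; exact: nbhs_left_gt.
by near: u; exact: nbhs_left_lt.
Unshelve. all: by end_near. Qed.
Arguments left_lim_ge {R f a c v}.

Section comparison.
Context {R : realType} {r p q eta cmu cnu : R} {fmu fnu Lw Xw : R -> R}.
Hypotheses (p_ge0 : 0 <= p) (p_le_r : p <= r) (cnu_ge0 : 0 <= cnu).
Hypotheses (fmu_ge0 : forall u, 0 <= fmu u) (fnu_ge0 : forall u, 0 <= fnu u).
Hypothesis fmu_int : lebesgue_measure.-integrable `[-p, 0] (EFin \o fmu).
Hypotheses (Xw_cadlag : cadlag_on Xw (-r))
  (Xw_sol : solves_path r p q eta cmu cnu fmu fnu Lw Xw).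

Let drift s := eta - cmu * Xw s + xi r p q fmu fnu Lw Xw s.
Let I := Rintegral lebesgue_measure `[-p, 0] fmu.
Let xm := eta / (cmu - I).

Let r_ge0 : 0 <= r. Proof. exact: le_trans p_ge0 p_le_r. Qed.

Let I_ge0 : 0 <= I.
Proof. by apply: Rintegral_ge0 => u _; exact: fmu_ge0. Qed.

Lemma solves_path_increment_ge (a b : R) : 0 <= a <= b ->
  (forall u, -r <= u < b -> 0 <= Xw u) ->
  \int[lebesgue_measure]_(s in `]a, b]) drift s <= Xw b - Xw a.
Proof.
move=> /andP[a0 ab] Xw_ge0.
have [_ _ int_b int_J ->] := Xw_sol b (le_trans a0 ab).
have [_ _ _ _ ->] := Xw_sol a a0.
have J_le : dS_int r Lw 0 a (left_lim Xw) <= dS_int r Lw 0 b (left_lim Xw).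
  apply: dS_int_le => // v [/=]; rewrite !in_itv /= andbT => /andP[_ vb] rv.
  apply: (left_lim_ge Xw_cadlag) => // u /andP[ru uv]; apply: Xw_ge0.
  by rewrite ru (lt_le_trans uv vb).
rewrite -(Rintegral_itvB int_b) ?bnd_simp //.
have : 0 <= cnu * (dS_int r Lw 0 b (left_lim Xw) - dS_int r Lw 0 a (left_lim Xw)).
  by rewrite mulr_ge0 // subr_ge0.
lra.
Qed.

Lemma drift_ge (c s : R) : 0 <= c -> 0 <= s ->
  (forall u, -r <= u <= s -> c <= Xw u) ->
  eta - cmu * Xw s + I * c <= drift s.
Proof.
move=> c0 s0 Xw_ge; rewrite lerD2l /xi -[leLHS]addr0; apply: lerD.
  have [int_fmuX _ _ _ _] := Xw_sol s s0.
  rewrite /I -RintegralZr //; apply: le_Rintegral => //.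
  - rewrite (_ : _ \o _ = (EFin \o fmu) \* cst c%:E)%E; first exact: integrableZr.
    by apply/funext => u /=; rewrite EFinM.
  - exact: int_fmuX.
  move=> u; rewrite /= in_itv /= => /andP[pu u0].
  apply: ler_wpM2l => //; apply: Xw_ge; rewrite gerDl u0 andbT -[- r]add0r.
  by apply: lerD => //; apply: le_trans pu; rewrite lerN2.
apply: dS_int_ge0 => v [/=]; rewrite !in_itv /= andbT => /andP[_ vs] rv.
apply: mulr_ge0 => //; apply: (le_trans c0); apply: (left_lim_ge Xw_cadlag) => // u /andP[ru uv].
by apply: Xw_ge; rewrite ru (ltW (lt_le_trans uv vs)).
Qed.

Lemma solves_path_ge_left_closed (l s : R) : 0 <= l -> 0 < s ->
  (forall u, -r <= u < s -> l <= Xw u) -> l <= Xw s.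
Proof.
move=> l0 s0 Xw_ge.
have [_ _ int_s _ _] := Xw_sol s (ltW s0).
pose PI u := parameterized_integral lebesgue_measure 0 u drift.
have PI_cvg : PI u @[u --> s^'-] --> PI s.
  exact: parameterized_integral_cvg_at_left.
have lim_l : l + (PI s - PI u) @[u --> s^'-] --> l.
  rewrite -[X in _ --> X]addr0 -(subrr (PI s)).
  by apply: cvgD; [exact: cvg_cst | apply: cvgB => //; exact: cvg_cst].
rewrite -(cvg_lim _ lim_l) //; apply: limr_le; first by apply/cvg_ex; exists l.
near=> u.
have u0 : 0 < u by near: u; exact: nbhs_left_gt.
have us : u < s by near: u; exact: nbhs_left_lt.
have ru : -r <= u by rewrite (le_trans _ (ltW u0)) // oppr_le0.
have := @solves_path_increment_ge u s.
rewrite -(Rintegral_itvB int_s) ?bnd_simp ?(ltW u0) ?(ltW us) //.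
move=> /(_ isT (fun v vs => le_trans l0 (Xw_ge v vs))).
have := Xw_ge u; rewrite ru us /PI /parameterized_integral => /(_ isT).
lra.
Unshelve. all: by end_near. Qed.

Hypothesis I_lt_cmu : I < cmu.

Let eta_eq : eta = (cmu - I) * xm.
Proof. by rewrite /xm mulrC divfK // gt_eqF // subr_gt0. Qed.

Lemma drift_ge0 (l δ v : R) : 0 <= δ <= l ->
  δ * (2 * cmu + I) <= (cmu - I) * (xm - l) -> 0 <= v ->
  (forall u, -r <= u <= v -> l - δ <= Xw u) -> Xw v <= l + 2 * δ ->
  0 <= drift v.
Proof.
move=> /andP[δ0 δl] δ_small v0 Xw_ge Xv_le.
have := @drift_ge (l - δ) v; rewrite subr_ge0 => /(_ δl v0 Xw_ge).
have : cmu * Xw v <= cmu * (l + 2 * δ).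
  by rewrite ler_wpM2l // (le_trans I_ge0 (ltW I_lt_cmu)).
rewrite eta_eq; nra.
Qed.

Lemma solves_path_ge_right_extend (l s : R) : 0 < l < xm -> 0 <= s ->
  (forall u, -r <= u <= s -> l <= Xw u) ->
  exists2 s', s < s' & forall u, s <= u <= s' -> l <= Xw u.
Proof.
move=> /andP[l0 lxm] s0 Xw_ge.
have rs : -r <= s by rewrite (le_trans _ s0) // oppr_le0.
have cmuI_gt0 : 0 < 2 * cmu + I by have := I_ge0; have := I_lt_cmu; lra.
pose δ := Num.min l ((cmu - I) * (xm - l) / (2 * cmu + I)).
have δ0 : 0 < δ by rewrite lt_min l0 divr_gt0 // mulr_gt0 // subr_gt0.
have δl : δ <= l by rewrite ge_min lexx.
have δ_small : δ * (2 * cmu + I) <= (cmu - I) * (xm - l).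
  by rewrite -ler_pdivlMr // ge_min lexx orbT.
have [e e0 Xw_near] : exists2 e, 0 < e &
    forall u, s < u -> u < s + e -> `|Xw s - Xw u| < δ.
  have [/cvgrPdist_lt /(_ δ δ0) [e /= e0 Xw_e] _] := Xw_cadlag s rs.
  exists e => // u su use; apply: Xw_e => //=.
  by rewrite /ball_ /= ltr0_norm ?subr_lt0 // opprB ltrBlDl.
exists (s + e / 2); first by rewrite ltrDl divr_gt0.
move=> u /andP[su us']; have [us|{}su] := leP u s.
  have -> : u = s by apply/le_anti; rewrite us su.
  by apply: Xw_ge; rewrite rs lexx.
have ue : u < s + e by rewrite (le_lt_trans us') // ltrD2l gtr_pMr // invf_lt1 // ltr1n.
have Xs_ge : l <= Xw s by apply: Xw_ge; rewrite rs lexx.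
have [Xs_big|Xs_small] := leP (l + δ) (Xw s).
  by move: (Xw_near u su ue); rewrite ltr_distlC => /andP[+ _]; lra.
have near_level w : s < w -> w <= u -> l - δ < Xw w < l + 2 * δ.
  move=> sw wu; move: (Xw_near w sw (le_lt_trans wu ue)).
  by rewrite ltr_distlC => /andP[lo hi]; apply/andP; split; lra.
have Xw_ge' w : -r <= w <= u -> l - δ <= Xw w.
  move=> /andP[rw wu]; have [ws|sw] := leP w s.
    by have := Xw_ge w; rewrite rw ws => /(_ isT); lra.
  by have /andP[/ltW] := near_level w sw wu.
have Xw_ge0 w : -r <= w < u -> 0 <= Xw w.
  move=> /andP[rw wu]; apply: le_trans (Xw_ge' w _); first by rewrite subr_ge0.
  by rewrite rw ltW.
have := @solves_path_increment_ge s u; rewrite s0 (ltW su) => /(_ isT Xw_ge0).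
have : 0 <= \int[lebesgue_measure]_(w in `]s, u]) drift w.
  apply: Rintegral_ge0 => w; rewrite /= in_itv /= => /andP[sw wu].
  apply: (@drift_ge0 l δ) => //.
  - by rewrite (ltW δ0) δl.
  - by rewrite (le_trans s0) // ltW.
  - by move=> w' /andP[rw' w'w]; apply: Xw_ge'; rewrite rw' (le_trans w'w wu).
  - by have /andP[_ /ltW] := near_level w sw wu.
lra.
Qed.

Lemma solves_path_ge_level (l : R) : 0 < l < xm ->
  (forall u, -r <= u -> u <= 0 -> xm <= Xw u) ->
  forall t, 0 <= t -> l <= Xw t.
Proof.
move=> /andP[l0 lxm] Xw_init.
have init u : -r <= u -> u <= 0 -> l <= Xw u.
  by move=> ru u0; exact: le_trans (ltW lxm) (Xw_init u ru u0).
have with_init s : (forall u, 0 <= u <= s -> l <= Xw u) ->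
    forall u, -r <= u <= s -> l <= Xw u.
  move=> Xw_ge u /andP[ru us]; have [u0|u0] := leP u 0; first exact: init.
  by apply: Xw_ge; rewrite ltW.
apply: real_induction; first by apply: init; rewrite ?oppr_le0.
- move=> s s0 Xw_lt; apply: solves_path_ge_left_closed => //; first exact: ltW.
  move=> u /andP[ru us]; have [u0|u0] := leP u 0; first exact: init.
  by apply: Xw_lt; rewrite ltW.
- move=> s s0 Xw_le; apply: solves_path_ge_right_extend => //; first by rewrite l0.
  exact: with_init.
Qed.

Lemma solves_path_ge : 0 < eta ->
  (forall u, -r <= u -> u <= 0 -> xm <= Xw u) -> forall t, 0 <= t -> xm <= Xw t.
Proof.
move=> eta_gt0 Xw_init t t0; apply/ler_ltP => l lxm.
have xm_gt0 : 0 < xm by rewrite divr_gt0 // subr_gt0.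
have [l0|l_gt0] := leP l 0.
  have xm2_gt0 : 0 < xm / 2 by rewrite divr_gt0.
  have xm2_lt : xm / 2 < xm by rewrite ltr_pdivrMr // ltr_pMr // ltr1n.
  apply: le_trans l0 (le_trans (ltW xm2_gt0) _).
  by apply: solves_path_ge_level; rewrite ?xm2_gt0.
by apply: solves_path_ge_level; rewrite ?l_gt0.
Qed.

End comparison.

Theorem theorem4p14 (R : realType) (d : measure_display) (T : measurableType d)
    (P : probability T R) (p q : R) (F : R -> set (set T)) (L X : R -> T -> R)
    (eta cmu cnu : R) (fmu fnu : R -> R) :
  0 <= p -> 0 <= q ->
  filtration (Num.max p q) F ->
  usual_conditions P (Num.max p q) F ->
  levy_process P (Num.max p q) F L ->
  (\int[P]_w ((L 1 w) ^+ 4)%:E < +oo)%E ->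
  0 < cnu ->
  continuous fmu -> continuous fnu ->
  (forall u, 0 <= fmu u) -> (forall u, 0 <= fnu u) ->
  (forall u, ~ (-p <= u <= 0) -> fmu u = 0) ->
  (forall u, ~ (-q <= u <= 0) -> fnu u = 0) ->
  (forall u, - Num.max p q <= u -> u <= 0 ->
     measurable_wrt (natural_filtration (Num.max p q) L u) (X u)) ->
  is_solution P (Num.max p q) F p q eta cmu cnu fmu fnu L X ->
  0 < eta ->
  Rintegral lebesgue_measure `[-p, 0] fmu < cmu ->
  {ae P, forall w, forall u, - Num.max p q <= u -> u <= 0 ->
     eta / (cmu - Rintegral lebesgue_measure `[-p, 0] fmu) <= X u w} ->
  forall t, 0 < t ->
  {ae P, forall w,
     eta / (cmu - Rintegral lebesgue_measure `[-p, 0] fmu) <= X t w}.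
Proof.
move=> p_ge0 _ _ _ _ _ cnu_gt0 fmu_cont _ fmu_ge0 fnu_ge0 _ _ _ [_ X_cadlag _ X_sol]
  eta_gt0 I_lt_cmu X_init t t_gt0.
have fmu_int : lebesgue_measure.-integrable `[-p, 0] (EFin \o fmu).
  apply: continuous_compact_integrable; first exact: segment_compact.
  exact: continuous_subspaceT.
have p_le_r : p <= Num.max p q by rewrite le_max lexx.
apply: filterS2 X_sol X_init => w sol init.
exact: (solves_path_ge p_ge0 p_le_r (ltW cnu_gt0) fmu_ge0 fnu_ge0 fmu_int
  (X_cadlag w) sol I_lt_cmu eta_gt0 init t (ltW t_gt0)).
Qed.
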